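(* The function $h_1(x)=\exp\bigl(\cot(x)\bigr)$ is completely monotonic on $(0,\pi/2]$, and the function $h_2(x)=\exp\left(\dfrac{1}{1+\tan(x)}\right)$ is completely monotonic on $(-\pi/4,\pi/4]$.
   Context: A function $f:I\to\mathbb{R}$ on an interval $I\subset\mathbb{R}$ is completely monotonic if it has derivatives of all orders and $(-1)^n f^{(n)}(x)\ge 0$ for all $n=0,1,2,\dots$ and $x\in I$. *)

From Stdlib Require Import Reals.
From Coquelicot Require Import Coquelicot.
Open Scope R_scope.

Definition cot (x : R) : R := cos x / sin x.

Definition completely_monotonic (f : R -> R) (I : R -> Prop) : Prop :=
  forall (n : nat) (x : R), I x ->
    ex_derive_n f n x /\ 0 <= (-1) ^ n * Derive_n f n x.

Definition h1 (x : R) : R := exp (cot x).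
Definition h2 (x : R) : R := exp (1 / (1 + tan x)).

(* If g' = -(a g^2 + b) with a, b >= 0, then by induction the n-th derivative
   of K exp(g) is (-1)^n K exp(g) Q_n(g), where Q_0 = 1 and
   Q_{n+1} = (a X^2 + b) (Q_n + Q_n'); all Q_n have nonnegative coefficients,
   so (-1)^n f^(n) >= 0 wherever g >= 0.  Both functions are of this form:
   cot' = -(cot^2 + 1), and g = 1/(1 + tan) - 1/2 satisfies g' = -(2 g^2 + 1/2),
   so that h2 = exp(1/2) exp(g); moreover cot >= 0 on (0, pi/2] and
   g >= 0 on (-pi/4, pi/4]. *)
From Stdlib Require Import Reals Lra Lia.
From Coquelicot Require Import Coquelicot.
Open Scope R_scope.

Inductive nonneg_poly : (R -> R) -> Prop :=
| nonneg_poly_const c : 0 <= c -> nonneg_poly (fun _ => c)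
| nonneg_poly_id : nonneg_poly (fun y => y)
| nonneg_poly_add P Q : nonneg_poly P -> nonneg_poly Q -> nonneg_poly (fun y => P y + Q y)
| nonneg_poly_mul P Q : nonneg_poly P -> nonneg_poly Q -> nonneg_poly (fun y => P y * Q y).

Lemma nonneg_poly_ge0 P : nonneg_poly P -> forall y, 0 <= y -> 0 <= P y.
Proof.
  induction 1; intros y Hy; auto.
  - specialize (IHnonneg_poly1 y Hy); specialize (IHnonneg_poly2 y Hy); lra.
  - specialize (IHnonneg_poly1 y Hy); specialize (IHnonneg_poly2 y Hy); nra.
Qed.

Lemma nonneg_poly_derive P :
  nonneg_poly P -> exists P', nonneg_poly P' /\ forall y, is_derive P y (P' y).
Proof.
  induction 1 as [c Hc| |P Q _ [P' [HP' DP]] _ [Q' [HQ' DQ]]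
                        |P Q HP [P' [HP' DP]] HQ [Q' [HQ' DQ]]].
  - exists (fun _ => 0); split; [constructor; lra | intros; auto_derive; auto].
  - exists (fun _ => 1); split; [constructor; lra | intros; auto_derive; auto].
  - exists (fun y => P' y + Q' y); split; [constructor; auto |].
    intros y; exact (is_derive_plus P Q y _ _ (DP y) (DQ y)).
  - exists (fun y => P' y * Q y + P y * Q' y); split.
    + do 2 constructor; auto.
    + intros y; exact (is_derive_mult P Q y _ _ (DP y) (DQ y) Rmult_comm).
Qed.

Lemma is_derive_exp_mul_poly_riccati (g P P' : R -> R) (a b x : R) :
  is_derive g x (-(a * g x ^ 2 + b)) -> is_derive P (g x) (P' (g x)) ->
  is_derive (fun y => exp (g y) * P (g y)) x
    (- (exp (g x) * ((a * (g x * g x) + b) * (P (g x) + P' (g x))))).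
Proof.
  intros Dg DP.
  pose proof (is_derive_comp exp g x _ _ (is_derive_exp (g x)) Dg) as Deg.
  pose proof (is_derive_comp P g x _ _ DP Dg) as DPg.
  pose proof (is_derive_mult _ _ x _ _ Deg DPg Rmult_comm) as D.
  unfold scal, plus, mult in D; simpl in D; unfold mult in D; simpl in D.
  match type of D with is_derive _ _ ?v =>
    replace (- _) with v by ring end.
  exact D.
Qed.

Section RiccatiExponential.

Variables (f g : R -> R) (K a b lo hi : R).
Hypotheses (Ha : 0 <= a) (Hb : 0 <= b).
Hypothesis f_def : forall x, lo < x < hi -> f x = K * exp (g x).
Hypothesis g_riccati : forall x, lo < x < hi -> is_derive g x (-(a * g x ^ 2 + b)).

Lemma Derive_n_exp_riccati n :
  exists Q, nonneg_poly Q /\ forall x, lo < x < hi ->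
    Derive_n f n x = (-1) ^ n * (K * exp (g x) * Q (g x)) /\ ex_derive_n f n x.
Proof.
  induction n as [|n [Q [HQ IH]]].
  - exists (fun _ => 1); split; [constructor; lra |].
    intros x Hx; simpl; rewrite f_def by exact Hx; split; [ring | exact I].
  - destruct (nonneg_poly_derive Q HQ) as [Q' [HQ' DQ]].
    exists (fun y => (a * (y * y) + b) * (Q y + Q' y)); split.
    { apply nonneg_poly_mul; apply nonneg_poly_add; auto.
      apply nonneg_poly_mul; [apply nonneg_poly_const; exact Ha |].
      apply nonneg_poly_mul; apply nonneg_poly_id.
      apply nonneg_poly_const; exact Hb. }
    intros x Hx.
    assert (Dn : is_derive (Derive_n f n) x
      ((-1) ^ S n * (K * exp (g x) * ((a * (g x * g x) + b) * (Q (g x) + Q' (g x)))))).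
    { apply is_derive_ext_loc with (f := fun y => (-1) ^ n * K * (exp (g y) * Q (g y))).
      { apply (locally_interval _ x lo hi); try apply Hx.
        intros y Hlo Hhi; rewrite (proj1 (IH y (conj Hlo Hhi))); simpl; ring. }
      pose proof (is_derive_scal _ x ((-1) ^ n * K) _
        (is_derive_exp_mul_poly_riccati g Q Q' a b x (g_riccati x Hx) (DQ (g x)))) as D.
      unfold scal in D; simpl in D; unfold mult in D; simpl in D.
      replace ((-1) ^ S n * _) with ((-1) ^ n * K *
        - (exp (g x) * ((a * (g x * g x) + b) * (Q (g x) + Q' (g x))))) by (simpl; ring).
      exact D. }
    split; simpl; [apply is_derive_unique | eexists]; exact Dn.
Qed.

Lemma completely_monotonic_exp_riccati (I : R -> Prop) :
  0 <= K -> (forall x, I x -> lo < x < hi /\ 0 <= g x) -> completely_monotonic f I.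
Proof.
  intros HK HI n x Hx.
  destruct (HI x Hx) as [Hx' Hg].
  destruct (Derive_n_exp_riccati n) as [Q [HQ HD]].
  destruct (HD x Hx') as [-> Hex]; split; [exact Hex |].
  assert (Hsign : (-1) ^ n * (-1) ^ n = 1).
  { rewrite <- pow_add, <- pow_1_even with n; f_equal; lia. }
  rewrite <- Rmult_assoc, Hsign, Rmult_1_l.
  pose proof (nonneg_poly_ge0 Q HQ _ Hg); pose proof (exp_pos (g x)).
  apply Rmult_le_pos; [apply Rmult_le_pos|]; lra.
Qed.

End RiccatiExponential.

Lemma is_derive_cot x : 0 < x < PI -> is_derive cot x (-(1 * cot x ^ 2 + 1)).
Proof.
  intros Hx; pose proof (sin_gt_0 x (proj1 Hx) (proj2 Hx)).
  unfold cot; auto_derive; [lra |].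
  pose proof (sin2_cos2 x); unfold Rsqr in *.
  field_simplify_eq; [nra | lra].
Qed.

Lemma cot_ge0 x : 0 < x <= PI / 2 -> 0 <= cot x.
Proof.
  intros Hx; pose proof PI_RGT_0.
  pose proof (sin_gt_0 x ltac:(lra) ltac:(lra)).
  pose proof (cos_ge_0 x ltac:(lra) ltac:(lra)).
  unfold cot; apply Rmult_le_pos; [lra | left; apply Rinv_0_lt_compat; lra].
Qed.

Definition shifted_h2_exponent x := 1 / (1 + tan x) - 1 / 2.

Lemma tan_gt_m1 x : - (PI / 4) < x < PI / 2 -> -1 < tan x.
Proof.
  intros Hx; pose proof PI_RGT_0.
  replace (-1) with (tan (- (PI / 4))) by (rewrite tan_neg, tan_PI4; ring).
  apply tan_increasing; lra.
Qed.

Lemma is_derive_shifted_h2_exponent x : - (PI / 4) < x < PI / 2 ->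
  is_derive shifted_h2_exponent x (-(2 * shifted_h2_exponent x ^ 2 + 1 / 2)).
Proof.
  intros Hx; pose proof PI_RGT_0.
  pose proof (cos_gt_0 x ltac:(lra) ltac:(lra)).
  pose proof (tan_gt_m1 x Hx); unfold tan in *.
  assert (Hcs : 1 + sin x * / cos x = (cos x + sin x) * / cos x) by (field; lra).
  assert (0 < cos x + sin x).
  { apply Rmult_lt_reg_r with (/ cos x); [apply Rinv_0_lt_compat; lra |].
    unfold Rdiv in *; rewrite <- Hcs; lra. }
  unfold shifted_h2_exponent, tan; auto_derive; [repeat split; lra |].
  pose proof (sin2_cos2 x); unfold Rsqr in *.
  unfold Rdiv; rewrite Hcs; field_simplify_eq; split; lra.
Qed.

Lemma shifted_h2_exponent_ge0 x : - (PI / 4) < x <= PI / 4 -> 0 <= shifted_h2_exponent x.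
Proof.
  intros Hx; pose proof PI_RGT_0.
  pose proof (tan_gt_m1 x ltac:(lra)).
  assert (tan x <= 1) by (rewrite <- tan_PI4; apply tan_incr_1; lra).
  unfold shifted_h2_exponent.
  replace (1 / (1 + tan x) - 1 / 2) with ((1 - tan x) * / (2 * (1 + tan x))) by (field; lra).
  apply Rmult_le_pos; [lra | left; apply Rinv_0_lt_compat; lra].
Qed.

Theorem corollary1 :
  completely_monotonic h1 (fun x => 0 < x <= PI / 2) /\
  completely_monotonic h2 (fun x => - (PI / 4) < x <= PI / 4).
Proof.
  pose proof PI_RGT_0; split.
  - apply (completely_monotonic_exp_riccati h1 cot 1 1 1 0 PI); try lra.
    + intros x _; unfold h1; ring.
    + exact is_derive_cot.
    + intros x Hx; split; [lra | exact (cot_ge0 x Hx)].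
  - apply (completely_monotonic_exp_riccati h2 shifted_h2_exponent (exp (1 / 2)) 2 (1 / 2)
      (- (PI / 4)) (PI / 2)); try lra.
    + intros x _; unfold h2, shifted_h2_exponent; rewrite <- exp_plus; f_equal; ring.
    + exact is_derive_shifted_h2_exponent.
    + left; apply exp_pos.
    + intros x Hx; split; [lra | exact (shifted_h2_exponent_ge0 x Hx)].
Qed.
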